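(* Let $K$ be a semiring, $G$ a finite group and $M$ a $K[G]$-module. Suppose $M$ is weakly reflexive as a $K$-module and $M^\vee$ is finitely generated (as a $K$-module). Then $M$ is isomorphic to a $K[G]$-submodule of $K[G]^n$ for some $n$.
   Context: Semirings are commutative; $K[G]$ is the group semiring. $M^\vee=\mathrm{Hom}_K(M,K)$, which carries the right $G$-action $(\phi g)(x)=\phi(gx)$. $M$ is weakly reflexive if the canonical map $M\to M^{\vee\vee}$, $x\mapsto(\psi\mapsto\psi(x))$, is injective. *)

From HB Require Import structures.
From mathcomp Require Import all_boot all_order all_algebra all_fingroup.
Set Implicit Arguments. Unset Strict Implicit. Unset Printing Implicit Defensive.
Import GRing.Theory.
Local Open Scope ring_scope.

(* Conventions:
   - a semiring K is a commutative semiring (comPzSemiRingType);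
   - a K-module is an lSemiModType K;
   - a K[G]-module for a finite group G (the whole finGroupType gT) is a
     K-module M with a left action of G by K-linear maps;
   - K[G]^n is represented by coefficient functions 'I_n -> gT -> K, where the
     element sum_h v i h * h in the i-th copy; g acts by left multiplication,
     so (g . v) i h = v i (g^-1 * h). *)

Definition is_Kdual (K : comPzSemiRingType) (M : lSemiModType K) (phi : M -> K) :=
  [/\ phi 0 = 0,
      forall x y : M, phi (x + y) = phi x + phi y &
      forall (a : K) (x : M), phi (a *: x) = a * phi x].

(* Weakly reflexive: the canonical map M -> M^vee^vee, x |-> (psi |-> psi x),
   is injective (two elements of M^vee^vee are equal iff they agree on M^vee). *)
Definition weakly_reflexive (K : comPzSemiRingType) (M : lSemiModType K) :=
  forall x y : M, (forall phi : M -> K, is_Kdual phi -> phi x = phi y) -> x = y.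

Definition dual_fin_gen (K : comPzSemiRingType) (M : lSemiModType K) :=
  exists (m : nat) (s : 'I_m -> M -> K),
    (forall i, is_Kdual (s i)) /\
    forall phi : M -> K, is_Kdual phi ->
      exists c : 'I_m -> K, forall x : M, phi x = \sum_(i < m) c i * s i x.

Definition is_KG_action (K : comPzSemiRingType) (gT : finGroupType)
    (M : lSemiModType K) (act : gT -> M -> M) :=
  [/\ forall x : M, act 1%g x = x,
      forall (g h : gT) (x : M), act (g * h)%g x = act g (act h x),
      forall g : gT, act g 0 = 0,
      forall (g : gT) (x y : M), act g (x + y) = act g x + act g y &
      forall (g : gT) (a : K) (x : M), act g (a *: x) = a *: act g x].

Definition KG_embedding (K : comPzSemiRingType) (gT : finGroupType)
    (M : lSemiModType K) (act : gT -> M -> M) (n : nat)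
    (f : M -> 'I_n -> gT -> K) :=
  [/\ forall i h, f 0 i h = 0,
      forall (x y : M) i h, f (x + y) i h = f x i h + f y i h,
      forall (a : K) (x : M) i h, f (a *: x) i h = a * f x i h,
      forall (g : gT) (x : M) i h, f (act g x) i h = f x i (g^-1 * h)%g &
      forall x y : M, (forall i h, f x i h = f y i h) -> x = y].

(* Weak reflexivity says that the linear forms on M separate its points, so
   finitely many generators s_1, ..., s_n of M^vee already do: x |-> (s_i x)_i
   is an injective K-linear map M -> K^n.  Inducing it up to G gives the
   K[G]-linear map x |-> (sum_h s_i (h^-1 x) h)_i into K[G]^n, which is still
   injective because its coefficient at h = 1 recovers (s_i x)_i. *)

From HB Require Import structures.
From mathcomp Require Import all_boot all_order all_algebra all_fingroup.

Set Implicit Arguments. Unset Strict Implicit. Unset Printing Implicit Defensive.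
Import GRing.Theory.
Local Open Scope ring_scope.

Section DualGenerators.

Variables (K : comPzSemiRingType) (M : lSemiModType K).

Lemma dual_generators_separate (m : nat) (s : 'I_m -> M -> K) :
    weakly_reflexive M ->
    (forall phi : M -> K, is_Kdual phi ->
      exists c : 'I_m -> K, forall x : M, phi x = \sum_(i < m) c i * s i x) ->
  forall x y : M, (forall i, s i x = s i y) -> x = y.
Proof.
move=> wrM s_gen x y sxy; apply: wrM => phi phi_dual.
have [c phiE] := s_gen phi phi_dual.
by rewrite !phiE; apply: eq_bigr => i _; rewrite sxy.
Qed.

End DualGenerators.

Section InducedEmbedding.

Variables (K : comPzSemiRingType) (gT : finGroupType) (M : lSemiModType K).
Variables (act : gT -> M -> M) (m : nat) (s : 'I_m -> M -> K).

Definition induced_coeffs (x : M) (i : 'I_m) (h : gT) : K := s i (act h^-1%g x).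

Lemma KG_embedding_induced_coeffs :
    is_KG_action act ->
    (forall i, is_Kdual (s i)) ->
    (forall x y : M, (forall i, s i x = s i y) -> x = y) ->
  KG_embedding act induced_coeffs.
Proof.
move=> [act1 actM act0 actD actZ] s_dual s_inj; rewrite /induced_coeffs.
split.
- by move=> i h; rewrite act0; case: (s_dual i).
- by move=> x y i h; rewrite actD; case: (s_dual i).
- by move=> a x i h; rewrite actZ; case: (s_dual i).
- by move=> g x i h; rewrite -actM invMg invgK.
- move=> x y fxy; apply: s_inj => i.
  by have := fxy i 1%g; rewrite invg1 !act1.
Qed.

End InducedEmbedding.

Theorem proposition4p8 (K : comPzSemiRingType) (gT : finGroupType)
    (M : lSemiModType K) (act : gT -> M -> M) :
  is_KG_action act ->
  weakly_reflexive M ->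
  dual_fin_gen M ->
  exists (n : nat) (f : M -> 'I_n -> gT -> K), KG_embedding act f.
Proof.
move=> actKG wrM [m [s [s_dual s_gen]]].
exists m, (induced_coeffs act s).
apply: KG_embedding_induced_coeffs => //.
exact: dual_generators_separate s_gen.
Qed.
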